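(* Let $\Sigma$ be an alphabet with at least two letters and $f\colon\Sigma^*\to\Sigma^*$ RCP. If there exists $u\in\Sigma^*$ with $u\neq\varepsilon$ and $f(u)=\varepsilon$, then $f(x)=\varepsilon$ for all $x\in\Sigma^*$.
   Context: $\Sigma^*$ is the free monoid over $\Sigma$ (finite words, concatenation, empty word $\varepsilon$). A function $f\colon(\Sigma^* )^k\to\Sigma^*$ is RCP if for every monoid morphism $\varphi\colon\Sigma^*\to\Sigma^*$ and all $u_1,\ldots,u_k,v_1,\ldots,v_k$ with $\varphi(u_i)=\varphi(v_i)$ for all $i$, we have $\varphi(f(u_1,\ldots,u_k))=\varphi(f(v_1,\ldots,v_k))$. *)

From mathcomp Require Import all_boot.
Set Implicit Arguments. Unset Strict Implicit. Unset Printing Implicit Defensive.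

Definition monoid_morphism (Sigma : Type) (phi : seq Sigma -> seq Sigma) : Prop :=
  phi [::] = [::] /\ forall u v, phi (u ++ v) = phi u ++ phi v.

Definition RCP1 (Sigma : Type) (f : seq Sigma -> seq Sigma) : Prop :=
  forall phi : seq Sigma -> seq Sigma, monoid_morphism phi ->
    forall u v : seq Sigma, phi u = phi v -> phi (f u) = phi (f v).

(* Collapsing morphisms [c |-> c^p, d |-> c^q (d <> c)] send a word w to the
   unary word of length [p |w|_c + q |w|_(<>c)], so an RCP function preserves
   equalities between these weights.  With [p = q = 1] the weight is the length:
   f vanishes on all words of length |u|.  If f vanishes on length N, then with
   [q = 0] any x with at most N occurrences of c has the same weight as a word
   of length N, so c does not occur in f x; the only word of length N+1 escaping
   this is c^(N+1), which [p = N, q = N+1] identifies with e^N for a letter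
   e <> c.  By induction f vanishes on every length >= |u|, and then on every
   word by the [q = 0] argument again. *)
From Pilot Require Import Defs.
From mathcomp Require Import all_boot.
From mathcomp Require Import zify.
Set Implicit Arguments. Unset Strict Implicit.

Definition weight (T : eqType) (p q : nat) (c : T) (w : seq T) : nat :=
  p * count_mem c w + q * count (predC1 c) w.

Definition collapse (T : eqType) (p q : nat) (c : T) (w : seq T) : seq T :=
  flatten [seq nseq (if d == c then p else q) c | d <- w].

Lemma collapse_morphism (T : eqType) p q (c : T) : Defs.monoid_morphism (collapse p q c).
Proof. by split=> // v w; rewrite /collapse map_cat flatten_cat. Qed.

Lemma collapseE (T : eqType) p q (c : T) w :
  collapse p q c w = nseq (weight p q c w) c.
Proof.
rewrite /weight; elim: w => [|d w IHw] /=; first by rewrite !muln0.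
rewrite /collapse /= -/(collapse p q c w) IHw -nseqD.
by case: (d =P c) => _ /=; congr nseq; lia.
Qed.

Lemma weight11_size (T : eqType) (c : T) w : weight 1 1 c w = size w.
Proof. by rewrite /weight !mul1n count_predC. Qed.

Lemma weight_nil (T : eqType) p q (c : T) : weight p q c [::] = 0.
Proof. by rewrite /weight !muln0. Qed.

Lemma weight_nseq_same (T : eqType) p q (c : T) n : weight p q c (nseq n c) = p * n.
Proof. by rewrite /weight !count_nseq /= eqxx; lia. Qed.

Lemma weight_nseq_other (T : eqType) p q (c e : T) n :
  e != c -> weight p q c (nseq n e) = q * n.
Proof. by move=> /negbTE ec; rewrite /weight !count_nseq /= ec; lia. Qed.

Lemma weight_eq0_mem (T : eqType) p q (c : T) w :
  0 < p -> weight p q c w = 0 -> c \notin w.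
Proof.
move=> p_gt0 /eqP; rewrite /weight addn_eq0 muln_eq0 (negbTE (lt0n_neq0 p_gt0)) /=.
by case/andP=> /eqP/count_memPn.
Qed.

Lemma RCP1_weight (T : eqType) (f : seq T -> seq T) :
  RCP1 f -> forall p q (c : T) x y, weight p q c x = weight p q c y ->
  weight p q c (f x) = weight p q c (f y).
Proof.
move=> fRCP p q c x y wxy; have := fRCP _ (collapse_morphism p q c) x y.
by rewrite !collapseE wxy => /(_ erefl)/(congr1 size); rewrite !size_nseq.
Qed.

Lemma exists_other_letter (T : finType) (c : T) : 1 < #|T| -> exists e, e != c.
Proof.
case/card_gt1P=> x [y [_ _ xy]].
by case: (x =P c) => [xc | /eqP]; [exists y; rewrite -xc eq_sym | exists x].
Qed.

Section VanishingRCP.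

Variables (Sigma : finType) (f : seq Sigma -> seq Sigma).
Hypotheses (Sigma_gt1 : 1 < #|Sigma|) (fRCP : RCP1 f).

Definition vanishes_on_size (N : nat) : Prop := forall v, size v = N -> f v = [::].

Lemma vanishes_on_size_of u : f u = [::] -> vanishes_on_size (size u).
Proof.
move=> fu v vu; case fv: (f v) => [|c t] //.
have := RCP1_weight fRCP (p := 1) (q := 1) (c := c) (x := u) (y := v).
by rewrite !weight11_size vu fu fv => /(_ erefl).
Qed.

Lemma notin_f_count_le N c x :
  vanishes_on_size N -> count_mem c x <= N -> c \notin f x.
Proof.
move=> fN cxN; have [e ec] := exists_other_letter c Sigma_gt1.
pose y := nseq (count_mem c x) c ++ nseq (N - count_mem c x) e.
have fy : f y = [::] by apply: fN; rewrite size_cat !size_nseq; lia.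
apply: (weight_eq0_mem (p := 1) (q := 0)) => //.
rewrite (RCP1_weight fRCP (y := y)) ?fy ?weight_nil //.
by rewrite /weight /y !mul0n !addn0 count_cat !count_nseq /= eqxx (negbTE ec); lia.
Qed.

Lemma notin_f_nseq N c :
  0 < N -> vanishes_on_size N -> c \notin f (nseq N.+1 c).
Proof.
move=> N_gt0 fN; have [e ec] := exists_other_letter c Sigma_gt1.
apply: (weight_eq0_mem (q := N.+1) N_gt0).
rewrite (RCP1_weight fRCP (y := nseq N e)) ?fN ?size_nseq ?weight_nil //.
by rewrite weight_nseq_same weight_nseq_other // mulnC.
Qed.

Lemma vanishes_on_sizeS N : 0 < N -> vanishes_on_size N -> vanishes_on_size N.+1.
Proof.
move=> N_gt0 fN x sx; case fx: (f x) => [|c t] //.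
have cfx : c \in f x by rewrite fx mem_head.
case: (leqP (count_mem c x) N) => [cxN | cx_big].
  by rewrite (negbTE (notin_f_count_le fN cxN)) in cfx.
have /all_pred1P xE : all (pred1 c) x.
  by rewrite all_count eqn_leq count_size sx.
by rewrite xE sx (negbTE (notin_f_nseq c N_gt0 fN)) in cfx.
Qed.

End VanishingRCP.

Theorem mainTheorem7 (Sigma : finType) (hSigma : 2 <= #|Sigma|)
    (f : seq Sigma -> seq Sigma) (hf : RCP1 f)
    (u : seq Sigma) (hu : u <> [::]) (hfu : f u = [::]) :
  forall x : seq Sigma, f x = [::].
Proof.
have u_gt0 : 0 < size u by case: (u) hu.
have f_large k : vanishes_on_size f (size u + k).
  elim: k => [|k IHk]; first by rewrite addn0; apply: vanishes_on_size_of.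
  by rewrite addnS; apply: vanishes_on_sizeS; rewrite ?addn_gt0 ?u_gt0.
move=> x; case fx: (f x) => [|c t] //.
have cx : count_mem c x <= size u + size x.
  exact: leq_trans (count_size _ _) (leq_addl _ _).
by have := notin_f_count_le hSigma hf (f_large (size x)) cx; rewrite fx mem_head.
Qed.
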